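(* Let $T$ be an integral domain, let $K$ be a subfield of $T$ and $M$ a nonzero maximal ideal of $T$ such that $T=K+M$. Let $k$ be a subfield of $K$ and set $R=k+M$. Then: (1) If $M$ contains an irreducible element of $T$, then $R$ is a U-FFD if and only if $T$ is a U-FFD and the quotient group $K^\times/k^\times$ is finite. (2) If $M$ contains no irreducible element of $T$, then $R$ is a U-FFD if and only if $T$ is a U-FFD.
   Context: An integral domain is a U-FFD (has the U-FF property) if every nonzero element that is a unit or a finite product of irreducible elements has only finitely many factorizations into irreducibles, counted up to order and associates. $K^\times,k^\times$ denote the multiplicative groups of the fields. *)

From mathcomp Require Import all_boot all_algebra.
Set Implicit Arguments. Unset Strict Implicit. Unset Printing Implicit Defensive.
Import GRing.Theory.
Local Open Scope ring_scope.

Section Defs.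
Variable T : idomainType.

Definition is_subfield (S : T -> Prop) : Prop :=
  [/\ S 0, S 1,
      (forall x y, S x -> S y -> S (x - y)),
      (forall x y, S x -> S y -> S (x * y)) &
      (forall x, S x -> x != 0 -> exists2 y, S y & x * y = 1)].

Definition is_ideal (M : T -> Prop) : Prop :=
  [/\ M 0,
      (forall x y, M x -> M y -> M (x + y)) &
      (forall t x, M x -> M (t * x))].

Definition is_maximal_ideal (M : T -> Prop) : Prop :=
  [/\ is_ideal M, ~ M 1 &
      (forall J : T -> Prop, is_ideal J -> (forall x, M x -> J x) ->
         (forall x, J x -> M x) \/ J 1)].

Definition unit_in (S : T -> Prop) (x : T) : Prop :=
  S x /\ exists2 y, S y & x * y = 1.

Definition assoc_in (S : T -> Prop) (x y : T) : Prop :=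
  exists2 u, unit_in S u & x = u * y.

Definition irreducible_in (S : T -> Prop) (x : T) : Prop :=
  [/\ S x, x != 0, ~ unit_in S x &
      (forall a b, S a -> S b -> x = a * b -> unit_in S a \/ unit_in S b)].

(* a factorization of x in S: a list of irreducibles of S whose product is
   x up to a unit of S (units have the empty factorization) *)
Definition factorization_in (S : T -> Prop) (x : T) (l : seq T) : Prop :=
  (forall a, a \in l -> irreducible_in S a) /\ assoc_in S x (\prod_(a <- l) a).

Definition fact_equiv (S : T -> Prop) (l1 l2 : seq T) : Prop :=
  exists2 l2', perm_eq l2' l2 &
    size l1 = size l2' /\
    forall i, (i < size l1)%N -> assoc_in S (nth 0 l1 i) (nth 0 l2' i).

Definition finitely_many_factorizations (S : T -> Prop) (x : T) : Prop :=
  exists L : seq (seq T),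
    forall l, factorization_in S x l -> exists2 l', l' \in L & fact_equiv S l l'.

Definition UFFD (S : T -> Prop) : Prop :=
  forall x, S x -> x != 0 ->
    (unit_in S x \/
     exists l : seq T, (forall a, a \in l -> irreducible_in S a) /\ x = \prod_(a <- l) a) ->
    finitely_many_factorizations S x.

Definition sum_set (k M : T -> Prop) (x : T) : Prop :=
  exists a m, [/\ k a, M m & x = a + m].

Definition finite_unit_quotient (K k : T -> Prop) : Prop :=
  exists cs : seq T,
    forall a, K a -> a != 0 ->
      exists c b, [/\ c \in cs, k b, b != 0 & a = c * b].

End Defs.

From mathcomp Require Import all_boot all_algebra ring.
From Stdlib Require Import ClassicalEpsilon.
Set Implicit Arguments. Unset Strict Implicit. Unset Printing Implicit Defensive.
Import GRing.Theory.
Local Open Scope ring_scope.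

(* Projecting T = K + M onto K gives a ring morphism kpart : T -> K with kernel
   M, and R = k + M is the preimage of k.  A unit of T lies in R exactly when its
   K-component lies in k, so any factorization in T can be rebalanced by nonzero
   constants of K into one in R, and the irreducibles of R are the irreducibles
   of T that lie in R.  The factorization theories of R and T thus differ only in
   how an irreducible y of T splits into classes of R-associates: there is one
   class when y is outside M, and the classes are indexed by K^x/k^x when y is in
   M.  Conversely, for an irreducible p in M the factorizations (a p)(a^-1 p) of
   p^2, a in K^x, fall into finitely many classes only if K^x/k^x is finite. *)

Section Subfield.
Variables (T : idomainType) (S : T -> Prop).
Hypothesis HS : is_subfield S.

Lemma subfield0 : S 0. Proof. by case: HS. Qed.
Lemma subfield1 : S 1. Proof. by case: HS. Qed.

Lemma subfieldB x y : S x -> S y -> S (x - y).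
Proof. by case: HS => _ _ SB _ _; apply: SB. Qed.

Lemma subfieldM x y : S x -> S y -> S (x * y).
Proof. by case: HS => _ _ _ SM _; apply: SM. Qed.

Lemma subfield_unit x : S x -> x != 0 -> x \is a GRing.unit.
Proof.
by case: HS => _ _ _ _ SV Sx x0; have [y _ xy] := SV x Sx x0; apply/unitrPr; exists y.
Qed.

Lemma subfieldV x : S x -> S x^-1.
Proof.
move=> Sx; have [->|x0] := eqVneq x 0; first by rewrite invr0; apply: subfield0.
case: HS => _ _ _ _ SV; have [y Sy xy] := SV x Sx x0.
by rewrite (mulr1_eq xy).
Qed.

End Subfield.

Section Ideal.
Variables (T : idomainType) (M : T -> Prop).
Hypothesis HM : is_ideal M.

Lemma ideal0 : M 0. Proof. by case: HM. Qed.

Lemma idealD x y : M x -> M y -> M (x + y).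
Proof. by case: HM => _ MD _; apply: MD. Qed.

Lemma idealMl t x : M x -> M (t * x).
Proof. by case: HM => _ _ MM; apply: MM. Qed.

Lemma idealMr t x : M x -> M (x * t).
Proof. by rewrite mulrC; apply: idealMl. Qed.

Lemma idealB x y : M x -> M y -> M (x - y).
Proof. by move=> Mx My; apply: idealD => //; rewrite -mulN1r; apply: idealMl. Qed.

Lemma ideal_unit u : ~ M 1 -> u \is a GRing.unit -> ~ M u.
Proof. by move=> M1 uU Mu; apply: M1; rewrite -(mulVr uU); apply: idealMl. Qed.

End Ideal.

Section MulClosed.
Variables (T : idomainType) (S : T -> Prop).
Hypotheses (S1 : S 1) (SM : forall x y, S x -> S y -> S (x * y)).

Definition atomic_in (x : T) : Prop :=
  unit_in S x \/
  exists l : seq T, (forall a, a \in l -> irreducible_in S a) /\ x = \prod_(a <- l) a.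

Lemma unit_in_unitr u : unit_in S u -> u \is a GRing.unit.
Proof. by case=> _ [v _ uv]; apply/unitrPr; exists v. Qed.

Lemma unit_in1 : unit_in S 1.
Proof. by split=> //; exists 1; rewrite ?mulr1. Qed.

Lemma unit_inV u : unit_in S u -> unit_in S u^-1.
Proof.
move=> Uu; have uU := unit_in_unitr Uu; case: Uu => Su [v Sv uv].
by split; [rewrite (mulr1_eq uv) | exists u; rewrite ?mulVr].
Qed.

Lemma unit_inM u v : unit_in S u -> unit_in S v -> unit_in S (u * v).
Proof.
move=> [Su [u' Su' uu']] [Sv [v' Sv' vv']]; split; first exact: SM.
by exists (u' * v'); [apply: SM | rewrite mulrACA uu' vv' mulr1].
Qed.

Lemma assoc_in_refl x : assoc_in S x x.
Proof. by exists 1; [apply: unit_in1 | rewrite mul1r]. Qed.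

Lemma assoc_in_sym x y : assoc_in S x y -> assoc_in S y x.
Proof.
move=> [u Uu ->]; exists u^-1; first exact: unit_inV.
by rewrite mulKr // unit_in_unitr.
Qed.

Lemma assoc_in_trans x y z : assoc_in S x y -> assoc_in S y z -> assoc_in S x z.
Proof. by move=> [u Uu ->] [v Uv ->]; exists (u * v); rewrite ?mulrA //; apply: unit_inM. Qed.

Lemma irreducible_inMl u x : unit_in S u -> irreducible_in S x -> irreducible_in S (u * x).
Proof.
move=> Uu [Sx x0 nUx Ix]; have uU := unit_in_unitr Uu; have Uu' := unit_inV Uu.
split.
- exact: SM Uu.1 Sx.
- by rewrite mulf_neq0 //; apply: contraTneq uU => ->; rewrite unitr0.
- by move=> Uux; apply: nUx; rewrite -(mulKr uU x); apply: unit_inM.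
move=> a b Sa Sb e; have ex : x = (u^-1 * a) * b by rewrite -mulrA -e mulKr.
case: (Ix _ _ (SM Uu'.1 Sa) Sb ex) => [Ua|]; [left | by right].
by rewrite -(mulVKr uU a); apply: unit_inM.
Qed.

Lemma atomic_inP x : atomic_in x <-> exists l, factorization_in S x l.
Proof.
split=> [[Ux | [l [Il ->]]] | [[|a l] [Il [u Uu ->]]]].
- by exists [::]; split=> //; exists x; rewrite ?big_nil ?mulr1.
- by exists l; split=> //; apply: assoc_in_refl.
- by left; rewrite big_nil mulr1.
right; exists (u * a :: l); split; last by rewrite !big_cons mulrA.
move=> b; rewrite inE => /predU1P [-> | bl]; last by apply: Il; rewrite inE bl orbT.
by apply: irreducible_inMl => //; apply: Il; apply: mem_head.
Qed.

End MulClosed.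

Lemma unit_in_whole (T : idomainType) (u : T) :
  unit_in (fun _ : T => True) u <-> u \is a GRing.unit.
Proof.
split=> [[_ [v _ uv]] | uU]; first by apply/unitrPr; exists v.
by split=> //; exists u^-1; rewrite ?mulrV.
Qed.

(* By conversion, [fact_equiv S l1 l2] is
   [exists2 l2', perm_eq l2' l2 & pointwise (assoc_in S) l1 l2'],
   [finitely_many_factorizations S x] is
   [finite_up_to (fact_equiv S) (factorization_in S x)], and the hypothesis of
   [UFFD S] on x is [atomic_in S x]. *)
Definition pointwise (T : idomainType) (E : T -> T -> Prop) (l1 l2 : seq T) : Prop :=
  size l1 = size l2 /\ forall i, (i < size l1)%N -> E (nth 0 l1 i) (nth 0 l2 i).

Lemma pointwise_comp (T : idomainType) (E1 E2 E3 : T -> T -> Prop) l1 l2 l3 :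
  (forall x y z, E1 x y -> E2 y z -> E3 x z) ->
  pointwise E1 l1 l2 -> pointwise E2 l2 l3 -> pointwise E3 l1 l3.
Proof.
move=> E123 [s12 E12] [s23 E23]; split=> [|i i_lt]; first by rewrite s12.
by apply: E123 (E12 i i_lt) (E23 i _); rewrite -s12.
Qed.

Definition finite_up_to (X : eqType) (E : X -> X -> Prop) (Q : X -> Prop) : Prop :=
  exists L : seq X, forall x, Q x -> exists2 y, y \in L & E x y.

Lemma finite_up_to_bigcup (X I : eqType) (E : X -> X -> Prop) (Q : I -> X -> Prop)
    (s : seq I) :
  (forall i, finite_up_to E (Q i)) ->
  finite_up_to E (fun x => exists2 i, i \in s & Q i x).
Proof.
move=> finQ; elim: s => [|i s [L IH]]; first by exists [::] => x [].
have [Li HLi] := finQ i; exists (Li ++ L) => x [j].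
rewrite inE => /predU1P [-> | js] Qx.
  by have [y yLi Exy] := HLi x Qx; exists y; rewrite // mem_cat yLi.
have [y yL Exy] := IH x (ex_intro2 _ _ j js Qx).
by exists y; rewrite // mem_cat yL orbT.
Qed.

Lemma finite_up_to_pointwise (T : idomainType) (E Q : T -> T -> Prop) :
  (forall y, finite_up_to E (Q^~ y)) ->
  forall s, finite_up_to (pointwise E) (pointwise Q ^~ s).
Proof.
move=> finQ; elim=> [|y s [Ls IH]].
  by exists [:: [::]] => l [/size0nil -> _]; exists [::]; rewrite ?mem_head.
have [Cy HCy] := finQ y; exists (allpairs cons Cy Ls) => -[|a l] [] //= [sl] Qal.
have [z zCy Eaz] := HCy a (Qal 0%N isT).
have [l3 l3Ls [s3 El3]] := IH l (conj sl (fun i => Qal i.+1)).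
exists (z :: l3); first exact: allpairs_f.
by split=> [|[|i] /= i_lt]; rewrite /= ?s3 //; apply: El3.
Qed.

Section KPart.
Variables (T : idomainType) (K M : T -> Prop).
Hypotheses (HK : is_subfield K) (HM : is_ideal M) (M1 : ~ M 1).
Hypothesis HKM : forall t, sum_set K M t.

Lemma kpart_subproof t : exists a, K a /\ M (t - a).
Proof. by have [a [m [Ka Mm ->]]] := HKM t; exists a; rewrite addrC addKr. Qed.

Definition kpart (t : T) : T :=
  proj1_sig (constructive_indefinite_description _ (kpart_subproof t)).

Lemma kpart_K t : K (kpart t).
Proof. exact: (proj2_sig (constructive_indefinite_description _ (kpart_subproof t))).1. Qed.

Lemma kpart_M t : M (t - kpart t).
Proof. exact: (proj2_sig (constructive_indefinite_description _ (kpart_subproof t))).2. Qed.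

Lemma K_M_eq0 a : K a -> M a -> a = 0.
Proof.
move=> Ka Ma; apply/eqP; apply: contraT => a0.
by case: (ideal_unit HM M1 (subfield_unit HK Ka a0)).
Qed.

Lemma kpart_eq t a : K a -> M (t - a) -> kpart t = a.
Proof.
move=> Ka Mta; apply/eqP; rewrite -subr_eq0; apply/eqP.
apply: K_M_eq0; first exact: (subfieldB HK (kpart_K t) Ka).
have -> : kpart t - a = (t - a) - (t - kpart t) by ring.
exact: (idealB HM Mta (kpart_M t)).
Qed.

Lemma kpart_id a : K a -> kpart a = a.
Proof. by move=> Ka; apply: kpart_eq; rewrite // subrr; apply: ideal0 HM. Qed.

Lemma kpart_eq0 t : kpart t = 0 <-> M t.
Proof.
split=> [kt0 | Mt]; first by rewrite -[t]subr0 -kt0; apply: kpart_M.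
by apply: kpart_eq; rewrite ?subr0 //; apply: subfield0 HK.
Qed.

Lemma kpartM x y : kpart (x * y) = kpart x * kpart y.
Proof.
apply: kpart_eq; first exact: (subfieldM HK (kpart_K x) (kpart_K y)).
have -> : x * y - kpart x * kpart y = (x - kpart x) * y + kpart x * (y - kpart y) by ring.
exact: (idealD HM (idealMr HM _ (kpart_M x)) (idealMl HM _ (kpart_M y))).
Qed.

Lemma kpartZ c t : K c -> kpart (c * t) = c * kpart t.
Proof. by move=> Kc; rewrite kpartM kpart_id. Qed.

Lemma kpart_neq0 t : ~ M t -> kpart t != 0.
Proof. by move=> nMt; apply/eqP => /kpart_eq0. Qed.

Lemma kpart_unit t : ~ M t -> kpart t \is a GRing.unit.
Proof. by move=> nMt; apply: subfield_unit (kpart_K t) (kpart_neq0 nMt). Qed.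

Lemma kpart_normalize t : ~ M t -> kpart ((kpart t)^-1 * t) = 1.
Proof. by move=> nMt; rewrite kpartZ ?mulVr ?kpart_unit //; apply: subfieldV (kpart_K t). Qed.

Section SubRing.
Variable k : T -> Prop.
Hypotheses (Hk : is_subfield k) (HkK : forall x, k x -> K x).

Local Notation R := (sum_set k M).
Local Notation whole := (fun _ : T => True).
Let wholeM (x y : T) : whole x -> whole y -> whole (x * y) := fun _ _ => I.

Lemma sum_setP x : R x <-> k (kpart x).
Proof.
split=> [[a [m [ka Mm ->]]] | kx].
  by rewrite (@kpart_eq _ a) //; [apply: HkK | rewrite addrC addKr].
by exists (kpart x), (x - kpart x); split; [| apply: kpart_M | rewrite subrKC].
Qed.

Lemma sum_set_M x : M x -> R x.
Proof. by move/kpart_eq0 => kx0; apply/sum_setP; rewrite kx0; apply: subfield0 Hk. Qed.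

Lemma sum_set1 : R 1.
Proof. by apply/sum_setP; rewrite kpart_id; [apply: subfield1 Hk | apply: subfield1 HK]. Qed.

Lemma sum_set_mul x y : R x -> R y -> R (x * y).
Proof.
by move=> /sum_setP kx /sum_setP ky; apply/sum_setP; rewrite kpartM; apply: (subfieldM Hk kx ky).
Qed.

Lemma sum_set_normalize t : ~ M t -> R ((kpart t)^-1 * t).
Proof. by move=> nMt; apply/sum_setP; rewrite kpart_normalize //; apply: subfield1 Hk. Qed.

Lemma unit_in_sum_set u : unit_in R u <-> R u /\ u \is a GRing.unit.
Proof.
split=> [Uu | [Ru uU]]; first by split; [case: Uu | apply: unit_in_unitr Uu].
split=> //; exists u^-1; last by rewrite mulrV.
have ku : kpart u * kpart u^-1 = 1.
  by rewrite -kpartM mulrV // kpart_id //; apply: subfield1 HK.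
by apply/sum_setP; rewrite -(mulr1_eq ku); apply: (subfieldV Hk); apply/sum_setP.
Qed.

Lemma assoc_in_sum_set_whole x y : assoc_in R x y -> assoc_in whole x y.
Proof. by move=> [u /unit_in_sum_set [_ uU] ->]; exists u; rewrite ?unit_in_whole. Qed.

Lemma scale_in_sum_set t : exists2 c, K c /\ c != 0 & R (c * t).
Proof.
have [Mt | nMt] := classic (M t).
  exists 1; first by split; [apply: subfield1 HK | apply: oner_neq0].
  by apply: sum_set_M; rewrite mul1r.
exists (kpart t)^-1; last exact: sum_set_normalize.
by split; [apply: (subfieldV HK (kpart_K t)) | rewrite invr_neq0 // kpart_neq0].
Qed.

Lemma split_in_sum_set x y z : R x -> x = y * z ->
  exists c, [/\ K c, c != 0, R (c * y) & R (c^-1 * z)].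
Proof.
move=> /sum_setP kx exyz; have [My | nMy] := classic (M y); last first.
  exists (kpart y)^-1; split; last 2 first.
  - exact: sum_set_normalize.
  - apply/sum_setP; rewrite invrK kpartZ; last exact: kpart_K.
    by rewrite -kpartM -exyz.
  - exact: (subfieldV HK (kpart_K y)).
  - by rewrite invr_neq0 // kpart_neq0.
have [Mz | nMz] := classic (M z).
  exists 1; rewrite invr1 !mul1r; split; rewrite ?oner_neq0 //.
  - exact: subfield1 HK.
  - exact: sum_set_M.
  - exact: sum_set_M.
exists (kpart z); split; first exact: kpart_K.
- exact: kpart_neq0.
- exact/sum_set_M/(idealMl HM).
- exact: sum_set_normalize.
Qed.

Lemma irreducible_in_sum_set x : irreducible_in R x <-> R x /\ irreducible_in whole x.
Proof.
split=> [[Rx x0 nUx Ix] | [Rx [_ x0 nUx Ix]]]; split=> //.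
- split=> // [/unit_in_whole xU | a b _ _ exab]; first by apply: nUx; apply/unit_in_sum_set.
  have [c [Kc c0 Rca Rcb]] := split_in_sum_set Rx exab.
  have cU := subfield_unit HK Kc c0; have cVU : c^-1 \is a GRing.unit by rewrite unitrV.
  have : x = (c * a) * (c^-1 * b) by rewrite mulrACA mulrV // mul1r.
  case/(Ix _ _ Rca Rcb) => /unit_in_sum_set [_ U]; [left | right]; apply/unit_in_whole.
  + by rewrite -(unitrMr a cU).
  + by rewrite -(unitrMr b cVU).
- by move=> /unit_in_sum_set [_ xU]; apply: nUx; apply/unit_in_whole.
move=> a b Ra Rb exab.
by case: (Ix _ _ I I exab) => /unit_in_whole U; [left | right]; apply/unit_in_sum_set.
Qed.

Lemma factorization_sum_set_whole x l : factorization_in R x l -> factorization_in whole x l.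
Proof.
move=> [Il xl]; split; last exact: assoc_in_sum_set_whole.
by move=> a /Il /irreducible_in_sum_set [].
Qed.

Lemma factorization_in_sum_set x l : R x -> factorization_in whole x l ->
  exists2 r, factorization_in R x r & pointwise (assoc_in whole) l r.
Proof.
elim: l x => [|y l IH] x Rx [Il [u /unit_in_whole uU exu]].
  exists [::] => //; split=> //; exists x; rewrite ?big_nil ?mulr1 //.
  by apply/unit_in_sum_set; split=> //; rewrite exu big_nil mulr1.
rewrite big_cons mulrCA in exu.
have [c [Kc c0 Rcy Rz]] := split_in_sum_set Rx exu.
have cU := subfield_unit HK Kc c0.
have Fz : factorization_in whole (c^-1 * (u * \prod_(a <- l) a)) l.
  split=> [a al | ]; first by apply: Il; rewrite inE al orbT.
  by exists (c^-1 * u); rewrite ?mulrA // unit_in_whole unitrMl // unitrV.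
have [r [Ir [w Uw ez]] [slr lr]] := IH _ Rz Fz.
exists (c * y :: r).
  split=> [a | ].
    rewrite inE => /predU1P [-> | /Ir //]; apply/irreducible_in_sum_set; split=> //.
    apply: (irreducible_inMl wholeM); first exact/unit_in_whole.
    by apply: Il; apply: mem_head.
  by exists w; rewrite // big_cons exu [RHS]mulrCA -ez mulrACA mulrV // mul1r.
split=> [|[|i] /= i_lt]; rewrite /= ?slr //; last exact: lr.
by exists c^-1; rewrite ?mulKr // unit_in_whole unitrV.
Qed.

Lemma UFFD_sum_set_whole : UFFD R -> UFFD whole.
Proof.
move=> HR x _ x0 /(atomic_inP I wholeM) [l0 Fl0].
have [c [Kc c0] Rcx] := scale_in_sum_set x.
have cU := subfield_unit HK Kc c0.
have scale l : factorization_in whole x l -> factorization_in whole (c * x) l.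
  move=> [Il [u /unit_in_whole uU ->]]; split=> //; exists (c * u); rewrite ?mulrA //.
  by apply/unit_in_whole; rewrite unitrMr.
have [L HL] : finitely_many_factorizations R (c * x).
  apply: (HR _ Rcx (mulf_neq0 c0 x0)); apply/(atomic_inP sum_set1 sum_set_mul).
  by have [r Fr _] := factorization_in_sum_set Rcx (scale _ Fl0); exists r.
exists L => l /scale/(factorization_in_sum_set Rcx) [r /HL [l' l'L [l2 pl2 rl2]] lr].
exists l' => //; exists l2 => //.
apply: pointwise_comp lr rl2 => a b d ab bd.
exact: (assoc_in_trans wholeM ab) (assoc_in_sum_set_whole bd).
Qed.

Lemma K_assoc_in_sum_set p a b : p != 0 -> K a -> K b -> assoc_in R (a * p) (b * p) ->
  exists w, [/\ k w, w != 0 & a = b * w].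
Proof.
move=> p0 Ka Kb [u /unit_in_sum_set [/sum_setP ku uU] eab].
have {}eab : a = u * b by apply: (mulIf p0); rewrite eab mulrA.
exists (kpart u); split=> //; first by apply: kpart_neq0; apply: ideal_unit.
by rewrite -(kpart_id Ka) eab kpartM (kpart_id Kb) mulrC.
Qed.

Lemma finite_unit_quotient_of_UFFD p :
  M p -> irreducible_in whole p -> UFFD R -> finite_unit_quotient K k.
Proof.
move=> Mp Ip HR; have Rp := sum_set_M Mp; have p0 : p != 0 by case: Ip.
have [L HL] : finitely_many_factorizations R (p * p).
  apply: (HR _ (sum_set_mul Rp Rp) (mulf_neq0 p0 p0)); right; exists [:: p; p].
  split; last by rewrite !big_cons big_nil mulr1.
  by move=> a; rewrite !inE orbb => /eqP ->; apply/irreducible_in_sum_set.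
pose E a c := exists w, [/\ k w, w != 0 & a = c * w].
have [cs Hcs] : finite_up_to E
    (fun a => exists2 y, y \in flatten L & [/\ K a, a != 0 & assoc_in R (a * p) y]).
  apply: finite_up_to_bigcup => y.
  have [[a0 [Ka0 a00 a0y]] | none] :=
    classic (exists a0, [/\ K a0, a0 != 0 & assoc_in R (a0 * p) y]).
    exists [:: a0] => a [Ka a0' ay]; exists a0; first exact: mem_head.
    apply: K_assoc_in_sum_set p0 Ka Ka0 _.
    exact: (assoc_in_trans sum_set_mul ay (assoc_in_sym a0y)).
  by exists [::] => a ha; case: none; exists a.
exists cs => a Ka a0; have aU := subfield_unit HK Ka a0.
have Fa : factorization_in R (p * p) [:: a * p; a^-1 * p].
  split=> [b | ]; last first.
    exists 1; first exact: unit_in1 sum_set1.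
    by rewrite !big_cons big_nil mulr1 mul1r mulrACA mulrV // mul1r.
  have Icp c : c \is a GRing.unit -> irreducible_in R (c * p).
    move=> cU; apply/irreducible_in_sum_set; split; first exact/sum_set_M/(idealMl HM).
    by apply: (irreducible_inMl wholeM) => //; apply/unit_in_whole.
  by rewrite !inE => /orP [] /eqP ->; apply: Icp; rewrite ?unitrV.
have [l' l'L [l2 pl2 [sl2 al2]]] := HL _ Fa.
have [c c_cs [w [kw w0 ->]]] : exists2 c, c \in cs & E a c.
  apply: Hcs; exists (nth 0 l2 0); last by split=> //; apply: (al2 0%N).
  by apply/flattenP; exists l'; rewrite // -(perm_mem pl2) mem_nth // -sl2.
by exists c, w.
Qed.

Section FromWhole.
Hypothesis Hquot : (exists p, M p /\ irreducible_in whole p) -> finite_unit_quotient K k.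

Lemma finite_sum_set_associates y :
  finite_up_to (assoc_in R) (fun x => irreducible_in R x /\ assoc_in whole x y).
Proof.
have [My | nMy] := classic (M y); last first.
  have kyU := kpart_unit nMy.
  exists [:: (kpart y)^-1 * y] => x [/irreducible_in_sum_set [Rx _] [u /unit_in_whole uU exu]].
  subst x; exists ((kpart y)^-1 * y); first exact: mem_head.
  exists (u * kpart y); last by rewrite mulrA mulrK.
  apply/unit_in_sum_set; split; last by rewrite unitrMl.
  by apply/sum_setP; rewrite kpartM (kpart_id (kpart_K y)) -kpartM; apply/sum_setP.
have [Iy | nIy] := classic (irreducible_in whole y); last first.
  exists [::] => x [/irreducible_in_sum_set [_ Ix] xy]; case: nIy.
  have [v Uv ->] := assoc_in_sym xy.
  exact: (irreducible_inMl wholeM).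
have [cs Hcs] := Hquot (ex_intro _ y (conj My Iy)).
exists [seq c * y | c <- cs] => x [_ [u /unit_in_whole uU ->]].
have nMu : ~ M u := ideal_unit HM M1 uU.
have kuU := kpart_unit nMu.
have [c [b [c_cs kb b0 ecb]]] := Hcs _ (kpart_K u) (kpart_neq0 nMu).
exists (c * y); first exact: map_f.
exists (u * (kpart u)^-1 * b).
  apply/unit_in_sum_set; split.
    apply/sum_setP; rewrite !kpartM (kpart_id (subfieldV HK (kpart_K u))) mulrV // mul1r.
    by rewrite kpart_id //; apply: HkK.
  by rewrite !unitrMl ?unitrV // (subfield_unit Hk).
rewrite [RHS](_ : _ = u * ((kpart u)^-1 * (c * b)) * y); last by ring.
by rewrite -ecb mulVr // mulr1.
Qed.

Lemma UFFD_whole_sum_set : UFFD whole -> UFFD R.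
Proof.
move=> HT x Rx x0 /(atomic_inP sum_set1 sum_set_mul) [l0 Fl0].
have [L HL] : finitely_many_factorizations whole x.
  apply: (HT _ I x0); apply/(atomic_inP I wholeM).
  by exists l0; apply: factorization_sum_set_whole.
pose Q a y := irreducible_in R a /\ assoc_in whole a y.
have [Big HBig] : finite_up_to (pointwise (assoc_in R))
    (fun l => exists2 s, s \in flatten [seq permutations s | s <- L] & pointwise Q l s).
  apply: finite_up_to_bigcup; apply: finite_up_to_pointwise.
  exact: finite_sum_set_associates.
exists Big => l Fl.
have [l' l'L [l2 pl2 [sl2 al2]]] := HL l (factorization_sum_set_whole Fl).
have [l3 l3B pl3] : exists2 l3, l3 \in Big & pointwise (assoc_in R) l l3.
  apply: HBig; exists l2.
    by apply/flattenP; exists (permutations l'); rewrite ?mem_permutations //; apply: map_f.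
  split=> // i i_lt; split; last exact: al2.
  by apply: Fl.1; apply: mem_nth.
by exists l3 => //; exists l3.
Qed.

End FromWhole.
End SubRing.
End KPart.

Theorem mainTheorem5 (T : idomainType) (K M k : T -> Prop) :
  is_subfield K ->
  is_maximal_ideal M ->
  (exists m, M m /\ m != 0) ->
  (forall t, sum_set K M t) ->
  is_subfield k ->
  (forall x, k x -> K x) ->
  ((exists p, M p /\ irreducible_in (fun _ : T => True) p) ->
     (UFFD (sum_set k M) <-> UFFD (fun _ : T => True) /\ finite_unit_quotient K k))
  /\
  (~ (exists p, M p /\ irreducible_in (fun _ : T => True) p) ->
     (UFFD (sum_set k M) <-> UFFD (fun _ : T => True))).
Proof.
move=> HK [HM M1 _] _ HKM Hk HkK.
have R_T := UFFD_sum_set_whole HK HM M1 HKM Hk HkK.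
have T_R := UFFD_whole_sum_set HK HM M1 HKM Hk HkK.
split=> [[p [Mp Ip]] | noIrr]; split.
- by move=> HR; split; [apply: R_T | apply: finite_unit_quotient_of_UFFD Mp Ip HR].
- by case=> HT Hq; apply: (T_R (fun _ => Hq)).
- exact: R_T.
- by apply: T_R => Irr; case: (noIrr Irr).
Qed.
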